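(* Let $n$ and $k$ be positive integers with $k \le n$, let $M$ be a matroid of rank $n$ with rank function $r$, and let $B_1, \dots, B_k$ be bases of $M$ (not necessarily disjoint). Let $\alpha = 3\lceil \log n\rceil$. Let $Q(B_1,\dots,B_k)$ denote the probability that, when $\alpha$-element subsets $S_1 \subseteq B_1, \dots, S_k \subseteq B_k$ are chosen independently, each uniformly at random, one has $r(S_1 \cup \cdots \cup S_k) < k$. Let $Q_{k,n}$ denote the probability that, when $\alpha$-element subsets $S_1, \dots, S_k$ of $\{1,\dots,n\}$ are chosen independently and uniformly at random, one has $|S_1 \cup \cdots \cup S_k| < k$. Then $Q(B_1,\dots,B_k) \le Q_{k,n}$.
   Context: Here $\log$ denotes the natural logarithm. *)

From HB Require Import structures.
From mathcomp Require Import all_boot all_order all_algebra.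
From mathcomp Require Import all_reals all_analysis Rstruct.
Set Implicit Arguments. Unset Strict Implicit. Unset Printing Implicit Defensive.
Import Order.TTheory GRing.Theory Num.Theory.
Local Open Scope ring_scope.

Record matroid (T : finType) := Matroid {
  mrank : {set T} -> nat;
  mrank_card : forall X : {set T}, (mrank X <= #|X|)%N;
  mrank_mono : forall X Y : {set T}, X \subset Y -> (mrank X <= mrank Y)%N;
  mrank_submod : forall X Y : {set T},
    (mrank (X :|: Y) + mrank (X :&: Y) <= mrank X + mrank Y)%N }.

Definition matroid_rank (T : finType) (M : matroid T) : nat := mrank M setT.

(* a basis is a maximal independent set: independent (r B = |B|) and
   spanning (r B = r E). *)
Definition is_basis (T : finType) (M : matroid T) (B : {set T}) : bool :=
  (mrank M B == #|B|) && (mrank M B == matroid_rank M).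

Definition alpha_of (n : nat) : nat :=
  (3 * `|Num.ceil (@ln Rdefinitions.R n%:R)|)%N.

(* Sample space: k-tuples (S_1..S_k) with S_i an a-subset of B_i; the
   independent uniform choice is the uniform distribution on this set. *)
Definition sample_space (T : finType) (k a : nat) (B : 'I_k -> {set T})
  : {set {ffun 'I_k -> {set T}}} :=
  [set S : {ffun 'I_k -> {set T}} | [forall i, (S i \subset B i) && (#|S i| == a)]].

Definition unif_prob (X : finType) (Omega E : {set X}) : rat :=
  (#|Omega :&: E|)%:R / (#|Omega|)%:R.

Definition Qmat (T : finType) (M : matroid T) (k : nat) (B : 'I_k -> {set T}) : rat :=
  let a := alpha_of (matroid_rank M) in
  unif_prob (sample_space a B)
    [set S : {ffun 'I_k -> {set T}} | (mrank M (\bigcup_i S i) < k)%N].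

Definition Qkn (k n : nat) : rat :=
  unif_prob (sample_space (alpha_of n) (fun _ : 'I_k => [set: 'I_n]))
    [set S : {ffun 'I_k -> {set 'I_n}} | (#|\bigcup_i S i| < k)%N].

(** Neither [0 < k <= n] nor the value of [alpha] matters: for every sample
  size [a] we build an injection from the [a]-samples [(S_1, ..., S_k)] of the
  bases into the [a]-samples of [{1, ..., n}] whose image [(S'_1, ..., S'_k)]
  satisfies [|S'_1 u ... u S'_k| <= r (S_1 u ... u S_k)].  Both sample spaces
  have [C(n, a)^k] points, so the event [r (S_1 u ... u S_k) < k] is at most
  as likely as [|S'_1 u ... u S'_k| < k].

  The samples are relabelled one at a time by bijections [B_i -> {1, ..., n}],
  keeping [|V| <= r U] for the union [U] of the samples processed so far and
  the union [V] of their relabellings.  For the next basis [B], pick [I] in [B]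
  of size [n - r U] independent over [U], and relabel [B :\: I], which has
  [r U] elements, onto a set containing [V].  Then for [S] in [B] the set
  [V u sg S] has at most [r U + |S :&: I| = r (U u (S :&: I))] elements. *)

From mathcomp Require Import all_boot all_order all_algebra.
From mathcomp Require Import all_reals all_analysis Rstruct.
From mathcomp Require Import boolp zify.
Import Order.TTheory GRing.Theory Num.Theory.

Set Implicit Arguments.
Unset Strict Implicit.
Unset Printing Implicit Defensive.

Lemma index_relabel_inj (X Y : eqType) (y0 : Y) (s : seq X) (t : seq Y) :
  uniq t -> size s <= size t ->
  {in s &, injective (fun x => nth y0 t (index x s))}.
Proof.
move=> t_uniq le_st x1 x2 x1s x2s /eqP.
rewrite nth_uniq ?(leq_trans _ le_st) ?index_mem // => /eqP.
exact: index_inj.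
Qed.

Lemma exists_inj_cover (T : finType) n (A B : {set T}) (V : {set 'I_n}) :
  0 < n -> A \subset B -> #|B| = n ->
  {sg : T -> 'I_n | {in B &, injective sg} & #|V| <= #|A| -> V \subset sg @: A}.
Proof.
move=> n_gt0 AB cardB.
pose s := enum A ++ enum (B :\: A); pose t := enum V ++ enum (~: V).
have mem_s x : (x \in s) = (x \in B).
  rewrite mem_cat !mem_enum inE.
  by case: (boolP (x \in A)) => [/(subsetP AB)->|].
have s_uniq : uniq s.
  rewrite cat_uniq !enum_uniq andbT /=; apply/hasPn => x.
  by rewrite !mem_enum inE => /andP[/negPf->].
have t_uniq : uniq t.
  rewrite cat_uniq !enum_uniq andbT /=; apply/hasPn => x.
  by rewrite !mem_enum inE => /negPf->.
have size_s : size s = n.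
  by rewrite size_cat -!cardE -cardB -(cardsID A B) (setIidPr AB).
have size_t : size t = n by rewrite size_cat -!cardE cardsC card_ord.
exists (fun x => nth (Ordinal n_gt0) t (index x s)).
  move=> x1 x2; rewrite -!mem_s.
  by apply: index_relabel_inj; rewrite ?size_s ?size_t.
move=> le_VA; apply/subsetP => v vV.
have iV : index v (enum V) < #|V| by rewrite cardE index_mem mem_enum.
have iA := leq_trans iV le_VA.
have [x0 _] : exists x0, x0 \in A by apply/card_gt0P; apply: leq_ltn_trans iA.
apply/imsetP; exists (nth x0 s (index v (enum V))).
  by rewrite nth_cat -cardE iA -mem_enum mem_nth // -cardE.
have le_An : #|A| <= n by rewrite -cardB subset_leq_card.
rewrite index_uniq ?size_s ?(leq_trans iA le_An) //.
by rewrite nth_cat -cardE iV nth_index ?mem_enum.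
Qed.

Lemma in_imset_inj (aT rT : finType) (f : aT -> rT) (D A1 A2 : {set aT}) :
  {in D &, injective f} -> A1 \subset D -> A2 \subset D ->
  f @: A1 = f @: A2 -> A1 = A2.
Proof.
move=> f_inj; suff sub (B1 B2 : {set aT}) : B1 \subset D -> B2 \subset D ->
    f @: B1 = f @: B2 -> B1 \subset B2.
  move=> A1D A2D eqf; apply/eqP.
  by rewrite eqEsubset (sub _ _ A1D A2D eqf) (sub _ _ A2D A1D (esym eqf)).
move=> B1D B2D eqf; apply/subsetP => x xB1.
have /imsetP[y yB2 fxy] : f x \in f @: B2 by rewrite -eqf imset_f.
by rewrite (f_inj x y (subsetP B1D x xB1) (subsetP B2D y yB2) fxy).
Qed.

Definition ffun_cons (X : Type) k (x : X) (f : {ffun 'I_k -> X}) :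
  {ffun 'I_k.+1 -> X} :=
  [ffun i => if unlift ord0 i is Some j then f j else x].

Definition ffun_behead (X : Type) k (f : {ffun 'I_k.+1 -> X}) :
  {ffun 'I_k -> X} :=
  [ffun j => f (lift ord0 j)].

Lemma ffun_cons0 (X : Type) k (x : X) (f : {ffun 'I_k -> X}) :
  ffun_cons x f ord0 = x.
Proof. by rewrite ffunE unlift_none. Qed.

Lemma ffun_behead_cons (X : Type) k (x : X) (f : {ffun 'I_k -> X}) :
  ffun_behead (ffun_cons x f) = f.
Proof. by apply/ffunP => j; rewrite !ffunE liftK. Qed.

Lemma ffun_cons_behead (X : Type) k (f : {ffun 'I_k.+1 -> X}) :
  ffun_cons (f ord0) (ffun_behead f) = f.
Proof.
by apply/ffunP => i; rewrite ffunE; case: unliftP => [j ->|->]; rewrite ?ffunE.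
Qed.

Lemma bigcup_ffun_behead (X : finType) k (S : {ffun 'I_k.+1 -> {set X}}) :
  \bigcup_i S i = S ord0 :|: \bigcup_j ffun_behead S j.
Proof. by rewrite big_ord_recl; under [in RHS]eq_bigr do rewrite ffunE. Qed.

Lemma sample_space_behead (X : finType) k a (C : 'I_k.+1 -> {set X}) S :
  (S \in sample_space a C) =
  [&& S ord0 \subset C ord0, #|S ord0| == a &
      ffun_behead S \in sample_space a (fun j => C (lift ord0 j))].
Proof.
rewrite !inE andbA; apply/forallP/andP => [S_C | [S0_C /forallP S_C] i].
  by split; [exact: S_C | apply/forallP => j; rewrite ffunE; exact: S_C].
by case: (unliftP ord0 i) => [j ->|->] //; have := S_C j; rewrite ffunE.
Qed.

Lemma card_sample_space (X : finType) k a (C : 'I_k -> {set X}) :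
  #|sample_space a C| = \prod_i 'C(#|C i|, a).
Proof.
pose F i := [set A : {set X} | A \subset C i & #|A| == a].
have -> : #|sample_space a C| = #|family F|.
  apply: eq_card => S; rewrite inE.
  by apply/forallP/familyP => S_F i; have := S_F i; rewrite inE.
rewrite card_family foldrE big_map big_enum /=.
by apply: eq_bigr => i _; rewrite cards_draws.
Qed.

Section MatroidRank.

Variables (T : finType) (M : matroid T).
Local Notation r := (mrank M).

Lemma mrank_setUl_le (X Y : {set T}) : r (X :|: Y) <= r X + #|Y|.
Proof. by have := mrank_submod M X Y; have := mrank_card M Y; lia. Qed.

Lemma mrank_setU_spanned (X Y : {set T}) :
  (forall y, y \in Y -> r (y |: X) <= r X) -> r (X :|: Y) <= r X.
Proof.
move=> spanned.
have -> : Y = \bigcup_(y in Y) [set y].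
  apply/setP=> y; apply/idP/bigcupP => [yY | [z zY /set1P-> //]].
  by exists y; rewrite ?set11.
apply: (big_ind (fun Z => r (X :|: Z) <= r X)) => [|Z1 Z2 le1 le2|y /spanned].
- by rewrite setU0.
- rewrite setUUr; have := mrank_submod M (X :|: Z1) (X :|: Z2).
  have : r X <= r ((X :|: Z1) :&: (X :|: Z2)).
    by apply: mrank_mono; rewrite subsetI !subsetUl.
  lia.
- by rewrite setUC.
Qed.

Lemma mrank_augment (X Y : {set T}) :
  r X < r (X :|: Y) -> exists2 y, y \in Y & r X < r (y |: X).
Proof.
have [/exists_inP[y] | /exists_inPn noinc] :=
  boolP [exists y in Y, r X < r (y |: X)]; first by exists y.
by rewrite ltnNge mrank_setU_spanned // => y /noinc; rewrite -leqNgt.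
Qed.

Definition indep_over (U I : {set T}) : Prop := r (U :|: I) = r U + #|I|.

Lemma indep_overW (U I : {set T}) : r U + #|I| <= r (U :|: I) -> indep_over U I.
Proof. by move=> ge; apply/eqP; rewrite eqn_leq ge mrank_setUl_le. Qed.

Lemma indep_over_subset (U I J : {set T}) :
  indep_over U I -> J \subset I -> indep_over U J.
Proof.
move=> indepI JI; apply: indep_overW; move: indepI; rewrite /indep_over.
have := mrank_submod M (U :|: J) (I :\: J).
have JIJ : J :|: I :\: J = I by rewrite -{1}(setIidPr JI) setID.
rewrite -setUA JIJ.
have := mrank_card M (I :\: J); rewrite cardsDS //.
have := subset_leq_card JI; have := mrank_mono M (subsetUl U J).
lia.
Qed.

Lemma extend_indep_over (U B : {set T}) m :
  m <= r (U :|: B) - r U ->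
  exists I : {set T}, [/\ I \subset B, #|I| = m & indep_over U I].
Proof.
elim: m => [|m IHm] m_le.
  exists set0; split; rewrite ?sub0set ?cards0 //.
  by apply: indep_overW; rewrite setU0 cards0 addn0.
have [I [IB cardI indepI]] := IHm (ltnW m_le).
have [b bB rb] : exists2 b, b \in B & r (U :|: I) < r (b |: (U :|: I)).
  apply: mrank_augment; rewrite -setUA (setUidPr IB).
  by move: indepI; rewrite /indep_over; lia.
have bI : b \notin I.
  apply: contraTN rb => bI.
  rewrite (setUidPr (_ : [set b] \subset U :|: I)) ?ltnn //.
  by rewrite sub1set inE bI orbT.
exists (b |: I); rewrite cardsU1 bI cardI; split=> //.
  by rewrite subUset sub1set bB IB.
apply: indep_overW; rewrite cardsU1 bI setUCA.
by move: indepI; rewrite /indep_over /=; lia.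
Qed.

Lemma basis_card (B : {set T}) : is_basis M B -> #|B| = matroid_rank M.
Proof. by case/andP => /eqP <- /eqP. Qed.

Lemma mrank_setU_basis (U B : {set T}) :
  is_basis M B -> r (U :|: B) = matroid_rank M.
Proof.
case/andP => _ /eqP rB; apply/eqP; rewrite eqn_leq mrank_mono ?subsetT //=.
by rewrite -{1}rB mrank_mono // subsetUr.
Qed.

Lemma exists_relabelling n (U B : {set T}) (V : {set 'I_n}) :
  0 < n -> #|B| = n -> r (U :|: B) = n ->
  {sg : T -> 'I_n | {in B &, injective sg} &
    #|V| <= r U ->
    forall S : {set T}, S \subset B -> #|V :|: sg @: S| <= r (U :|: S)}.
Proof.
move=> n_gt0 cardB rUB.
have rU_le : r U <= n by rewrite -rUB mrank_mono ?subsetUl.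
have /extend_indep_over/cid[I [IB cardI indepI]] : n - r U <= r (U :|: B) - r U.
  by rewrite rUB.
have cardBI : #|B :\: I| = r U by rewrite cardsDS // cardB cardI; lia.
have [sg sg_inj coverV] := exists_inj_cover V n_gt0 (subsetDl B I) cardB.
exists sg => // le_VU S SB.
have cover : V :|: sg @: S \subset sg @: (B :\: I :|: S :&: I).
  rewrite subUset; apply/andP; split.
    apply: subset_trans (imsetS _ (subsetUl _ _)).
    by apply: coverV; rewrite cardBI.
  apply: imsetS; apply/subsetP => x xS.
  by rewrite !inE xS (subsetP SB x xS) andbT orNb.
have := leq_trans (subset_leq_card cover) (leq_imset_card _ _).
have := (leq_card_setU (B :\: I) (S :&: I)).1.
have := indep_over_subset indepI (subsetIr S I).
have := mrank_mono M (setUS U (subsetIl S I)).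
by rewrite /indep_over cardBI; lia.
Qed.

End MatroidRank.

Section SampleRelabelling.

Variables (T : finType) (M : matroid T) (n a : nat).
Hypotheses (n_gt0 : 0 < n) (rank_n : matroid_rank M = n).

Lemma exists_sample_relabelling k (B : 'I_k -> {set T}) U (V : {set 'I_n}) :
  (forall i, is_basis M (B i)) ->
  {phi : {ffun 'I_k -> {set T}} -> {ffun 'I_k -> {set 'I_n}} |
    {in sample_space a B &, injective phi} &
    forall S, S \in sample_space a B ->
      phi S \in sample_space a (fun=> [set: 'I_n]) /\
      (#|V| <= mrank M U ->
       #|V :|: \bigcup_i phi S i| <= mrank M (U :|: \bigcup_i S i))}.
Proof.
elim: k B U V => [|k IHk] B U V basisB.
  exists (fun=> [ffun=> set0]) => [S S' _ _ _ | S _].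
    by apply/ffunP => -[].
  by rewrite !big_ord0 !setU0 inE; split=> //; apply/forallP => -[].
have cardB0 : #|B ord0| = n by rewrite (basis_card (basisB ord0)).
have rUB0 : mrank M (U :|: B ord0) = n.
  by rewrite (mrank_setU_basis _ (basisB ord0)).
have [sg sg_inj sgP] := exists_relabelling V n_gt0 cardB0 rUB0.
pose Phi S0 :=
  IHk (fun j => B (lift ord0 j)) (U :|: S0) (V :|: sg @: S0) (fun=> basisB _).
exists (fun S : {ffun 'I_k.+1 -> {set T}} =>
          ffun_cons (sg @: S ord0) (s2val (Phi (S ord0)) (ffun_behead S))).
  move=> S S'; rewrite !sample_space_behead.
  move=> /and3P[S0B _ SB] /and3P[S0B' _ SB'] eqphi.
  have eq0 : S ord0 = S' ord0.
    have := congr1 (fun S : {ffun 'I_k.+1 -> {set 'I_n}} => S ord0) eqphi.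
    rewrite /= !ffun_cons0.
    exact: in_imset_inj sg_inj S0B S0B'.
  have eq_behead : ffun_behead S = ffun_behead S'.
    have := congr1 (@ffun_behead _ _) eqphi; rewrite !ffun_behead_cons eq0.
    exact: (s2valP (Phi (S' ord0))).
  by rewrite -[S]ffun_cons_behead -[S']ffun_cons_behead eq0 eq_behead.
move=> S; rewrite sample_space_behead => /and3P[S0B cardS0 SB].
have [sampleS' le_VU'] := s2valP' (Phi (S ord0)) _ SB.
split.
  rewrite sample_space_behead ffun_cons0 ffun_behead_cons subsetT sampleS'.
  by rewrite card_in_imset ?cardS0 //; apply: sub_in2 sg_inj; apply/subsetP.
move=> le_VU; rewrite !bigcup_ffun_behead ffun_cons0 ffun_behead_cons !setUA.
exact/le_VU'/sgP.
Qed.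

End SampleRelabelling.

Local Open Scope ring_scope.

Lemma unif_prob_le_inj (X Y : finType) (O1 E1 : {set X}) (O2 E2 : {set Y})
    (f : X -> Y) :
  #|O1| = #|O2| -> {in O1 &, injective f} ->
  {in O1 :&: E1, forall x, f x \in O2 :&: E2} ->
  unif_prob O1 E1 <= unif_prob O2 E2.
Proof.
move=> cardO f_inj fE; rewrite /unif_prob cardO ler_wpM2r ?invr_ge0 // ler_nat.
rewrite -(card_in_imset (sub_in2 _ f_inj)); last by move=> x /setIP[].
by apply/subset_leq_card/subsetP => _ /imsetP[x xE ->]; exact: fE.
Qed.

Theorem lemma1p5 (n k : nat) (T : finType) (M : matroid T)
  (B : 'I_k -> {set T}) :
  (0 < n)%N -> (0 < k)%N -> (k <= n)%N ->
  matroid_rank M = n ->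
  (forall i, is_basis M (B i)) ->
  Qmat M B <= Qkn k n.
Proof.
move=> n_gt0 _ _ rank_n basisB; rewrite /Qmat /Qkn /= rank_n.
have [phi phi_inj phiP] :=
  exists_sample_relabelling (alpha_of n) n_gt0 rank_n set0 set0 basisB.
apply: (unif_prob_le_inj (f := phi)) => //.
  rewrite !card_sample_space; apply: eq_bigr => i _.
  by rewrite cardsT card_ord (basis_card (basisB i)) rank_n.
move=> S /setIP[sampleS]; rewrite inE => rank_lt.
have [sampleS' le_card] := phiP S sampleS.
rewrite in_setI sampleS' inE (leq_ltn_trans _ rank_lt) //.
by have := le_card; rewrite cards0 !set0U; apply.
Qed.
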